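(* Let $f$ be any probability density on $(0,1)$, let $r:=\sup\{p\ge1: f\in\mathcal L^p(0,1)\}$, and assume $r<\infty$ and $n(1-1/r)>1$. Let $X_1,\dots,X_n$ be i.i.d. with density $f$ and $Q=\sum_{i=1}^n(X_i-\overline X)^2$ with cdf $F_Q$. Then $F_Q(x)=o(x^\delta)$ as $x\to0^+$ for every $\delta<\delta_r:=\big(n(1-1/r)-1\big)/2$. *)

From HB Require Import structures.
From mathcomp Require Import all_boot all_order all_algebra.
From mathcomp Require Import all_classical all_reals all_analysis.
Set Implicit Arguments. Unset Strict Implicit. Unset Printing Implicit Defensive.
Import Order.TTheory GRing.Theory Num.Theory.
Import numFieldNormedType.Exports.
Local Open Scope classical_set_scope.
Local Open Scope ring_scope.

Definition in_Lp01 (R : realType) (f : R -> R) (p : R) : Prop :=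
  (\int[@lebesgue_measure R]_(x in `]0%R, 1%R[%classic) (`|f x| `^ p)%:E < +oo)%E.

Definition Lp_exponents (R : realType) (f : R -> R) : set R :=
  [set p | 1 <= p /\ in_Lp01 f p].

Definition is_density01 (R : realType) (f : R -> R) : Prop :=
  [/\ measurable_fun (`]0%R, 1%R[%classic : set R) f,
      (forall x, 0 < x < 1 -> 0 <= f x) &
      (\int[@lebesgue_measure R]_(x in `]0%R, 1%R[%classic) (f x)%:E = 1)%E].

Definition has_density01 d (T : measurableType d) (R : realType)
  (P : probability T R) (X : {RV P >-> R}) (f : R -> R) : Prop :=
  forall A : set R, measurable A ->
    P (X @^-1` A) =
    (\int[@lebesgue_measure R]_(x in A `&` `]0%R, 1%R[%classic) (f x)%:E)%E.

(* mutual independence of the finite family X_0, ..., X_{n-1}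
   (product rule for all families of Borel sets; taking A i = setT
    covers all subfamilies) *)
Definition mutually_independent d (T : measurableType d) (R : realType)
  (P : probability T R) (n : nat) (X : 'I_n -> {RV P >-> R}) : Prop :=
  forall A : 'I_n -> set R, (forall i, measurable (A i)) ->
    P (\bigcap_(i in [set: 'I_n]) (X i @^-1` A i)) =
    (\prod_(i < n) P (X i @^-1` A i))%E.

Definition Qstat d (T : measurableType d) (R : realType)
  (P : probability T R) (n : nat) (X : 'I_n -> {RV P >-> R}) (w : T) : R :=
  \sum_(i < n) (X i w - (\sum_(j < n) X j w) / n%:R) ^+ 2.

Definition cdfQ d (T : measurableType d) (R : realType)
  (P : probability T R) (n : nat) (X : 'I_n -> {RV P >-> R}) (x : R) : R :=
  fine (P [set w | Qstat X w <= x]).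

(* If Q <= x, every X_i lies within sqrt x of the sample mean, so the whole
   sample falls into a window [(k-1)h, (k+2)h] with h = 2 sqrt x, and about 1/h
   windows suffice to cover (0,1).  Truncating f at height h^(-1/p) shows that
   any set of measure 3h carries f-mass O(h^(1-1/p)) whenever f is in L^p, so by
   independence F_Q(x) = O(h^(-1) h^(n(1-1/p))) = O(x^((n(1-1/p)-1)/2)); taking
   p < r close enough to r beats any delta < delta_r. *)

From HB Require Import structures.
From mathcomp Require Import all_boot all_order all_algebra.
From mathcomp Require Import all_classical all_reals all_analysis.
From mathcomp Require Import ring lra measurable_realfun.

Set Implicit Arguments. Unset Strict Implicit. Unset Printing Implicit Defensive.
Import Order.TTheory GRing.Theory Num.Theory.
Import numFieldNormedType.Exports.
Local Open Scope classical_set_scope.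
Local Open Scope ring_scope.

Section Lp_bounds.
Variable R : realType.

Definition Lp01_integral (f : R -> R) (p : R) : R :=
  fine (\int[@lebesgue_measure R]_(x in `]0%R, 1%R[%classic) (`|f x| `^ p)%:E)%E.

Lemma Lp01_integral_ge0 (f : R -> R) p : 0 <= Lp01_integral f p.
Proof. by apply/fine_ge0/integral_ge0 => x _; rewrite lee_fin powR_ge0. Qed.

Lemma ler_powR_truncation (h p y : R) : 0 < h -> 1 <= p -> 0 <= y ->
  y <= h `^ (- p^-1) + h `^ (1 - p^-1) * y `^ p.
Proof.
move=> h0 p1 y0.
have p0 : 0 < p by exact: (lt_le_trans ltr01 p1).
set l := h `^ (- p^-1).
have l0 : 0 < l by exact: powR_gt0.
have [yl|ly] := leP y l.
  by rewrite (le_trans yl)// lerDl mulr_ge0// powR_ge0.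
have -> : h `^ (1 - p^-1) * y `^ p = l * (y / l) `^ p.
  have li : l^-1 = h `^ (p^-1) by rewrite /l powRN invrK.
  have hh : h `^ (p^-1 * p) = h.
    by rewrite mulVf ?gt_eqF//; apply: powRr1; exact: ltW.
  have h1 : h `^ (1 - p^-1) = h * l.
    rewrite powRD; last by rewrite (gt_eqF h0) implybT.
    by rewrite /l; congr (_ * _); apply: powRr1; exact: ltW.
  rewrite powRM ?invr_ge0 ?(ltW l0)// li -powRrM hh h1.
  by ring.
have /le1r_powR /(_ p1) yl : 1 <= y / l by rewrite ler_pdivlMr// mul1r ltW.
have ey : y = l * (y / l) by rewrite mulrC divfK ?gt_eqF.
rewrite {1}ey (le_trans (ler_wpM2l (ltW l0) yl))//.
by rewrite lerDr ltW.
Qed.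

Lemma integral_le_small_set (f : R -> R) (p h k : R) (D : set R) :
  measurable_fun (`]0%R, 1%R[%classic : set R) f ->
  (forall x, 0 < x < 1 -> 0 <= f x) -> 1 <= p -> in_Lp01 f p -> 0 < h ->
  measurable D -> D `<=` `]0%R, 1%R[%classic ->
  (lebesgue_measure D <= (k * h)%:E)%E ->
  (\int[@lebesgue_measure R]_(x in D) (f x)%:E <=
   ((k + Lp01_integral f p) * h `^ (1 - p^-1))%:E)%E.
Proof.
move=> mf f0 p1 fLp h0 mD D01 muD.
rewrite /Lp01_integral.
set L := (\int[@lebesgue_measure R]_(x in `]0%R, 1%R[%classic) _)%E.
set l := h `^ (- p^-1); set c := h `^ (1 - p^-1).
have l0 : 0 <= l by exact: powR_ge0.
have c0 : 0 <= c by exact: powR_ge0.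
have mfD : measurable_fun D f by exact: measurable_funS mf.
have mg : measurable_fun (`]0%R, 1%R[%classic : set R) (fun x => `|f x| `^ p).
  apply: (measurableT_comp (measurable_powR _)).
  exact: measurableT_comp.
have mgD : measurable_fun D (fun x => `|f x| `^ p) by exact: measurable_funS mg.
have fD x : D x -> 0 <= f x.
  by move=> /D01 /=; rewrite in_itv/= => /andP[a b]; apply: f0; rewrite a b.
apply: (@le_trans _ _ (\int[lebesgue_measure]_(x in D)
                         (l%:E + c%:E * (`|f x| `^ p)%:E))%E).
  apply: ge0_le_integral => //.
  - exact: measurableT_comp.
  - apply: (measurableT_comp (@EFin_measurable R setT)
              (g := fun x => l + c * `|f x| `^ p)).
    by apply: measurable_funD => //; exact: measurable_funM.
  - move=> x Dx; rewrite -EFinM -EFinD lee_fin ger0_norm ?fD//.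
    exact: ler_powR_truncation (fD _ Dx).
rewrite ge0_integralD//; last 2 first.
- by move=> x _; rewrite mule_ge0// lee_fin powR_ge0.
- apply: (measurableT_comp (@EFin_measurable R setT) (g := fun x => c * `|f x| `^ p)).
  exact: measurable_funM.
rewrite integral_cst// ge0_integralZl//; last exact: measurableT_comp.
have L0 : (0 <= L)%E by apply: integral_ge0 => x _; rewrite lee_fin powR_ge0.
have Lfin : L \is a fin_num by rewrite ge0_fin_numE.
have LD : (\int[lebesgue_measure]_(x in D) (`|f x| `^ p)%:E <= L)%E.
  by apply: ge0_subset_integral => //; exact: measurableT_comp.
have lh : l * h = c.
  rewrite /c powRD; last by rewrite (gt_eqF h0) implybT.
  by rewrite mulrC; congr (_ * _); apply/esym/powRr1; exact: ltW.
apply: le_trans (leeD (lee_wpmul2l _ muD) (lee_wpmul2l _ LD)) _; rewrite ?lee_fin//.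
rewrite -(fineK Lfin) -!EFinM -EFinD lee_fin mulrCA lh.
by rewrite /= mulrDl [fine L * c]mulrC.
Qed.

End Lp_bounds.

Section windows.
Variable R : realType.

Definition window (h : R) (k : nat) : set R :=
  `[(k%:R - 1) * h, (k%:R + 2) * h]%classic.

Lemma lebesgue_measure_window (h : R) k : 0 < h ->
  lebesgue_measure (window h k) = (3 * h)%:E.
Proof.
move=> h0; rewrite lebesgue_measure_itv/= lte_fin ifT; last first.
  by rewrite ltr_pM2r//; lra.
by congr (_%:E); ring.
Qed.

Lemma small_spread_in_window n (a : 'I_n -> R) (i0 : 'I_n) x : 0 < x ->
  \sum_(i < n) (a i - (\sum_(j < n) a j) / n%:R) ^+ 2 <= x -> 0 <= a i0 < 1 ->
  exists2 k, (k < (Num.truncn (2 * Num.sqrt x)^-1).+1)%N &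
    forall i, window (2 * Num.sqrt x) k (a i).
Proof.
move=> x0 Qx /andP[a00 a01].
set m := (\sum_(j < n) a j) / n%:R; set s := Num.sqrt x; set h := 2 * s.
have s0 : 0 < s by rewrite sqrtr_gt0.
have h0 : 0 < h by rewrite mulr_gt0.
have dev_le i : `|a i - m| <= s.
  rewrite -sqrtr_sqr ler_wsqrtr// (le_trans _ Qx)// (bigD1 i)//= lerDl.
  by apply: sumr_ge0 => j _; exact: sqr_ge0.
have /andP[k1 k2] := truncn_itv (divr_ge0 a00 (ltW h0)).
set k := Num.truncn (a i0 / h) in k1 k2 *.
have hV0 : 0 <= h^-1 by rewrite invr_ge0 ltW.
have /andP[_ N2] := truncn_itv hV0.
exists k.
  rewrite -(ltr_nat R); apply: le_lt_trans k1 _; apply: lt_trans N2.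
  by rewrite ltr_pdivrMr// mulVf ?gt_eqF.
move: k1 k2; rewrite ler_pdivlMr// ltr_pdivrMr// -natr1 => k1 k2 i.
move: (dev_le i) (dev_le i0); rewrite !ler_norml => /andP[u1 u2] /andP[v1 v2].
by rewrite /window/= in_itv/=; apply/andP; split; rewrite /h in k1 k2 *; nra.
Qed.

End windows.

Section sample_variance_cdf.
Variables (R : realType) (d : measure_display) (T : measurableType d).
Variables (P : probability T R) (f : R -> R) (p : R) (n : nat).
Variable X : 'I_n -> {RV P >-> R}.
Hypotheses (fd : is_density01 f) (p1 : 1 <= p) (fLp : in_Lp01 f p).
Hypotheses (Xf : forall i, has_density01 (X i) f) (Xind : mutually_independent X).

Lemma measurable_Qstat_le x : measurable [set w | Qstat X w <= x].
Proof.
have mQ : measurable_fun setT (Qstat X).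
  rewrite /Qstat; apply: measurable_sum => i.
  apply/measurable_funX/measurable_funB; first exact: measurable_funPT.
  apply: measurable_funM => //; apply: measurable_sum => j.
  exact: measurable_funPT.
rewrite -[X in measurable X]setTI.
have -> : [set w | Qstat X w <= x] = Qstat X @^-1` `]-oo, x].
  by apply/seteqP; split => w /=; rewrite in_itv.
exact: mQ.
Qed.

Lemma prob_window_le h k : 0 < h ->
  (P (\bigcap_(i in [set: 'I_n]) (X i @^-1` window h k)) <=
   (((3 + Lp01_integral f p) * h `^ (1 - p^-1)) ^+ n)%:E)%E.
Proof.
move=> h0; have [mf f0 _] := fd.
have mJ : measurable (window h k) by exact: measurable_itv.
rewrite (Xind (A := fun=> window h k)) //.
set a := (\int[@lebesgue_measure R]_(y in window h k `&` `]0%R, 1%R[%classic)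
            (f y)%:E)%E.
have a0 : (0 <= a)%E.
  apply: integral_ge0 => y [_ /=]; rewrite in_itv /= => y01.
  by rewrite lee_fin f0.
have ab : (a <= ((3 + Lp01_integral f p) * h `^ (1 - p^-1))%:E)%E.
  apply: integral_le_small_set => //; first exact: measurableI.
  rewrite -(lebesgue_measure_window k h0).
  by apply: le_measure; rewrite ?inE//; exact: measurableI.
have afin : a \is a fin_num by rewrite ge0_fin_numE// (le_lt_trans ab)// ltry.
rewrite (eq_bigr (fun=> (fine a)%:E)); last by move=> i _; rewrite Xf ?fineK.
rewrite prodEFin lee_fin prodr_const card_ord lerXn2r ?nnegrE ?fine_ge0//.
- by rewrite (le_trans (fine_ge0 a0))// -lee_fin fineK.
- by rewrite -lee_fin fineK.
Qed.

Lemma cdfQ_le (i0 : 'I_n) x : 0 < x ->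
  cdfQ X x <= (Num.truncn (2 * Num.sqrt x)^-1).+1%:R *
    ((3 + Lp01_integral f p) * (2 * Num.sqrt x) `^ (1 - p^-1)) ^+ n.
Proof.
move=> x0; set h := 2 * Num.sqrt x; set N := (Num.truncn h^-1).+1.
set b := (3 + _) * _.
have h0 : 0 < h by rewrite mulr_gt0// sqrtr_gt0.
(* [F 0] is the null event that [X i0] leaves (0,1). *)
pose F k := if k is k'.+1 then \bigcap_(i in [set: 'I_n]) (X i @^-1` window h k')
            else X i0 @^-1` (~` `]0%R, 1%R[%classic).
have mF k : measurable (F k).
  case: k => [|k] /=; first exact/measurable_funPTI/measurableC.
  apply: fin_bigcap_measurable; first exact: finite_finset.
  by move=> i _; apply: measurable_funPTI; exact: measurable_itv.
have PF0 : P (F 0%N) = 0%E by rewrite /= Xf ?setICl ?integral_set0//; exact: measurableC.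
have cover : [set w | Qstat X w <= x] `<=` \big[setU/set0]_(k < N.+1) F k.
  move=> w /= Qw; rewrite -bigcup_mkord.
  have [Xw01|Xw01] := boolP (0 < X i0 w < 1).
    have [k kN Hk] : exists2 k, (k < N)%N & forall i, window h k (X i w).
      by apply: (small_spread_in_window (i0 := i0)) => //; case/andP: Xw01 => /ltW -> ->.
    by exists k.+1 => //= i _; exact: Hk.
  by exists 0%N => //=; rewrite in_itv/=; exact/negP.
have : (P [set w | (Qstat X w <= x)%R] <= (N%:R * b ^+ n)%:E)%E.
  apply: le_trans (content_subadditive _ _ _ cover) _ => //.
    exact: measurable_Qstat_le.
  rewrite big_ord_recl [X in (X + _)%E]PF0 add0e.
  apply: (@le_trans _ _ (\sum_(k < N) (b ^+ n)%:E)%E).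
    by apply: lee_sum => k _; exact: prob_window_le.
  by rewrite sumEFin lee_fin sumr_const card_ord mulr_natl.
by rewrite /cdfQ -lee_fin fineK// fin_num_measure//; exact: measurable_Qstat_le.
Qed.

End sample_variance_cdf.

Section exponent_bounds.
Variable R : realType.

Lemma Lp_exponents1 (f : R -> R) : is_density01 f -> Lp_exponents f 1.
Proof.
move=> [_ f0 f1]; split=> //; rewrite /in_Lp01.
suff -> : (\int[@lebesgue_measure R]_(x in `]0%R, 1%R[%classic) (`|f x| `^ 1)%:E =
           \int[@lebesgue_measure R]_(x in `]0%R, 1%R[%classic) (f x)%:E)%E.
  by rewrite f1 ltry.
apply: eq_integral => y; rewrite inE/= in_itv/= => y01.
by rewrite powRr1// ger0_norm// f0.
Qed.

Lemma exists_exponent_near_sup (S : set R) (q c : R) : has_ubound S -> S 1 ->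
  0 < q -> c < q * (1 - (sup S)^-1) -> exists2 p, S p & c < q * (1 - p^-1).
Proof.
move=> ubS S1 q0 cr.
have [c0|c0] := ltP c 0; first by exists 1; rewrite // invr1 subrr mulr0.
have r1 : 1 <= sup S by exact: ub_le_sup.
set u := 1 - c / q.
have qcq : q * (c / q) = c by rewrite mulrC divfK ?gt_eqF.
have ru : (sup S)^-1 < u.
  by rewrite -(ltr_pM2l q0) /u mulrBr mulr1 qcq; lra.
have u0 : 0 < u by rewrite (le_lt_trans _ ru)// invr_ge0; lra.
have uV : u^-1 < sup S.
  by rewrite -[sup S]invrK ltf_pV2 ?posrE ?invr_gt0//; lra.
have [p Sp up] := sup_gt (ex_intro _ 1 S1) uV.
exists p => //; have p0 : 0 < p by rewrite (lt_trans _ up)// invr_gt0.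
have pu : p^-1 < u by rewrite -[u]invrK ltf_pV2 ?posrE ?invr_gt0.
by move: pu; rewrite -(ltr_pM2l q0) /u mulrBr mulr1 qcq; lra.
Qed.

Lemma window_count_powR_le (x L a : R) (m : nat) :
  0 < x -> x <= 4^-1 -> 0 <= L -> 0 <= a ->
  (Num.truncn (2 * Num.sqrt x)^-1).+1%:R * ((3 + L) * (2 * Num.sqrt x) `^ a) ^+ m
  <= 2 * (3 + L) ^+ m * 2 `^ (a * m%:R - 1) * x `^ (2^-1 * (a * m%:R - 1)).
Proof.
move=> x0 x4 L0 a0; set s := Num.sqrt x; set h := 2 * s.
have s0 : 0 < s by rewrite sqrtr_gt0.
have h0 : 0 < h by rewrite mulr_gt0.
have sx : s ^+ 2 = x by rewrite sqr_sqrtr ?ltW.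
have h1 : h <= 1 by rewrite /h; nra.
have count_le : (Num.truncn h^-1).+1%:R <= 2 * h^-1.
  have hV0 : 0 <= h^-1 by rewrite invr_ge0 ltW.
  have hV1 : 1 <= h^-1 by rewrite invf_ge1.
  by have := truncn_le (h^-1); rewrite hV0 -natr1; lra.
have hm : (h `^ a) ^+ m = h `^ (a * m%:R) by rewrite -powR_mulrn ?powR_ge0// -powRrM.
have hV : h^-1 * h `^ (a * m%:R) = h `^ (a * m%:R - 1).
  by rewrite powRB ?(gt_eqF h0) ?implybT// mulrC powRr1 ?ltW.
have hx : h `^ (a * m%:R - 1) = 2 `^ (a * m%:R - 1) * x `^ (2^-1 * (a * m%:R - 1)).
  by rewrite powRM// ?(ltW s0)// powRrM powR12_sqrt// ltW.
apply: (@le_trans _ _ (2 * h^-1 * ((3 + L) ^+ m * h `^ (a * m%:R)))).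
  by rewrite exprMn hm ler_wpM2r// mulr_ge0 ?exprn_ge0 ?powR_ge0//; lra.
by rewrite -[X in _ <= X]mulrA -hx -hV le_eqVlt; apply/orP; left; apply/eqP; ring.
Qed.

End exponent_bounds.

Theorem theorem5 (R : realType) (f : R -> R) (n : nat)
  (d : measure_display) (T : measurableType d) (P : probability T R)
  (X : 'I_n -> {RV P >-> R}) :
  is_density01 f ->
  has_ubound (Lp_exponents f) ->
  1 < n%:R * (1 - (sup (Lp_exponents f))^-1) ->
  (forall i, has_density01 (X i) f) ->
  mutually_independent X ->
  forall delta : R,
    delta < (n%:R * (1 - (sup (Lp_exponents f))^-1) - 1) / 2 ->
    (fun x : R => cdfQ X x / x `^ delta) @ 0^'+ --> 0.
Proof.
move=> fd ubS; case: n X => [|n] X; first by rewrite mul0r ltr10.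
move=> _ Xf Xind delta hdelta.
have [p [p1 fLp] hp] := exists_exponent_near_sup (c := 2 * delta + 1) ubS
  (Lp_exponents1 fd) (ltr0Sn _ n) (ltac:(lra)).
set e := (1 - p^-1) * n.+1%:R - 1.
have a0 : 0 <= 1 - p^-1 by rewrite subr_ge0 invf_le1// (lt_le_trans ltr01).
have e_delta : 0 < 2^-1 * e - delta by rewrite /e mulrC; lra.
set K := 2 * (3 + Lp01_integral f p) ^+ n.+1 * 2 `^ e.
apply: (squeeze_cvgr (f := fun=> 0) (h := fun x => K * x `^ (2^-1 * e - delta))).
- near=> x.
  have x0 : 0 < x by near: x; exact: nbhs_right_gt.
  have x4 : x <= 4^-1 by apply: ltW; near: x; apply: nbhs_right_lt; rewrite invr_gt0.
  apply/andP; split; first by rewrite divr_ge0 ?powR_ge0// fine_ge0// measure_ge0.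
  rewrite powRB ?(gt_eqF x0) ?implybT// mulrA ler_pM2r ?invr_gt0 ?powR_gt0//.
  apply: le_trans (cdfQ_le fd p1 fLp Xf Xind ord0 x0) _.
  exact: window_count_powR_le (Lp01_integral_ge0 f p) a0.
- exact: cvg_cst.
- rewrite -[X in _ --> X](mulr0 K); apply: cvgMl_tmp.
  exact: powR_cvg0 e_delta.
Unshelve. all: by end_near.
Qed.
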